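(* For $k\geq 3$ and $r\geq 2$, $$\Delta^{M(k;r)}(k;r)\leq \Delta^{M(k-1;r)}(k-1;r)+M(k;r-1)-1.$$
   Context: A sequence of positive integers $w_1<\dots<w_n$ is an ascending wave if $w_{i+1}-w_i \geq w_i-w_{i-1}$ for $2\le i\le n-1$. $AW(k;r)$ is the least $N$ such that every $r$-coloring of $\{1,\dots,N\}$ contains a $k$-term monochromatic ascending wave. For $k\ge 2$ and $M\ge AW(k;r)$: for an $r$-coloring $\psi$ of $\{1,\dots,M\}$, $\delta_k(\psi)$ is the minimum of $w_k-w_{k-1}$ over all monochromatic $k$-term ascending waves $(w_1,\dots,w_k)$ under $\psi$, and $\Delta^M(k;r)$ is the maximum of $\delta_k(\psi)$ over all $r$-colorings $\psi$ of $\{1,\dots,M\}$. The integers $M(k;r)$ are defined by $M(k;1)=k$, $M(1;r)=1$, $M(2;r)=r+1$, and for $k\ge3$, $r\ge2$, $M(k;r)=M(k-1;r)+\Delta^{M(k-1;r)}(k-1;r)+M(k;r-1)-1$; one has $M(k;r)\ge AW(k;r)$ so these quantities are defined. *)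

From mathcomp Require Import all_boot.
Set Implicit Arguments. Unset Strict Implicit. Unset Printing Implicit Defensive.

Definition asc_wave (w : seq nat) : bool :=
  [&& all (fun x => 0 < x) w, sorted ltn w &
      all (fun i => nth 0 w i - nth 0 w i.-1 <= nth 0 w i.+1 - nth 0 w i)
          (iota 1 (size w - 2))].

(* An r-coloring of {1,...,N} is psi : {ffun 'I_N -> 'I_r}; the integer
   x in {1..N} is represented by the ordinal x-1, i.e. ordinal i stands for i+1. *)
Definition coloring (N r : nat) := {ffun 'I_N -> 'I_r}.

Definition wave_vals N k (t : k.-tuple 'I_N) : seq nat :=
  [seq (val x).+1 | x <- t].

Definition mono_wave N r k (psi : coloring N r) (t : k.-tuple 'I_N) : bool :=
  asc_wave (wave_vals t) && constant [seq psi x | x <- t].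

Definition last_gap N k (t : k.-tuple 'I_N) : nat :=
  nth 0 (wave_vals t) k.-1 - nth 0 (wave_vals t) k.-2.

Definition has_mono_wave N r k : Prop :=
  forall psi : coloring N r, exists t : k.-tuple 'I_N, mono_wave psi t.

(* delta_k(psi): minimum of w_k - w_{k-1} over all monochromatic k-term
   ascending waves (the default value N is only reached when there is no
   such wave, which does not happen for N >= AW(k;r)). *)
Definition delta (N r k : nat) (psi : coloring N r) : nat :=
  \big[minn/N]_(t : k.-tuple 'I_N | mono_wave psi t) last_gap t.
Arguments delta : clear implicits.

Definition Delta N k r : nat := \max_(psi : coloring N r) delta N r k psi.

(* M(k;r): M(k;1) = k, M(1;r) = 1, M(2;r) = r+1, and for k >= 3, r >= 2,
   M(k;r) = M(k-1;r) + Delta^{M(k-1;r)}(k-1;r) + M(k;r-1) - 1.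
   (Values at k = 0 or r = 0 are junk and never used.) *)
Fixpoint Mkr (k r : nat) {struct k} : nat :=
  match k with
  | 0 => 0
  | 1 => 1
  | 2 => r.+1
  | k'.+1 =>
      (fix g (r : nat) : nat :=
         match r with
         | 0 => 0
         | 1 => k
         | r'.+1 => Mkr k' r + Delta (Mkr k' r) k' r + g r' - 1
         end) r
  end.

From mathcomp Require Import all_boot order zify.
Set Implicit Arguments. Unset Strict Implicit. Unset Printing Implicit Defensive.
Import Order.TTheory.

(* Split [1, M(k;r)] into [1, M(k-1;r)], a gap, and a block B of M(k;r-1)
   consecutive integers.  A coloring of [1, M(k-1;r)] has a monochromatic
   (k-1)-term wave, of color c, ending at w with last gap g at most
   Delta^{M(k-1;r)}(k-1;r); let B start at w + g.  If some w + g + j in B has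
   color c, it extends the wave, with last gap g + j < g + |B|.  Otherwise B
   is colored with the r-1 other colors, so it contains a monochromatic k-term
   wave, whose last gap is smaller than |B| = M(k;r-1).  The same construction,
   by induction on k and r, shows that every r-coloring of [1, M(k;r)] has a
   monochromatic k-term wave, which supplies the waves used above. *)

Lemma asc_wave_map_addn a s : asc_wave s -> asc_wave (map (addn a) s).
Proof.
move=> /and3P [s_pos s_sorted s_gaps]; apply/and3P; split.
- by rewrite all_map; apply: sub_all s_pos => x /=; lia.
- by rewrite sorted_map; apply: sub_sorted s_sorted => x y /=; rewrite ltn_add2l.
- rewrite size_map; apply/allP => i i_in; have := allP s_gaps i i_in.
  move: i_in; rewrite mem_iota => i_range.
  by rewrite !(nth_map 0) ?subnDl //; lia.
Qed.

Lemma asc_wave_rcons s z : 2 <= size s -> asc_wave s ->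
    nth 0 s (size s).-1 - nth 0 s (size s).-2 <= z - nth 0 s (size s).-1 ->
  asc_wave (rcons s z).
Proof.
move=> s_ge2 /and3P [s_pos s_sorted s_gaps] gap_z.
have last_lt : nth 0 s (size s).-2 < nth 0 s (size s).-1.
  by apply: (sorted_ltn_nth ltn_trans 0 s_sorted); rewrite ?inE; lia.
have nth_s i : i < size s -> nth 0 (rcons s z) i = nth 0 s i.
  by move=> i_lt; rewrite nth_rcons i_lt.
apply/and3P; split.
- by rewrite all_rcons s_pos andbT; lia.
- case: s s_ge2 s_sorted last_lt gap_z {s_pos s_gaps nth_s} => [//|x s] _ /=.
  by rewrite rcons_path (nth_last 0 (x :: s)) => -> /=; lia.
- rewrite size_rcons (_ : (size s).+1 - 2 = (size s - 2) + 1); last by lia.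
  rewrite iotaD all_cat (_ : 1 + (size s - 2) = (size s).-1); last by lia.
  rewrite /= andbT; apply/andP; split.
  + apply/allP => i i_in; have := allP s_gaps i i_in.
    by move: i_in; rewrite mem_iota => i_range; rewrite !nth_s //; lia.
  + have nth_z : nth 0 (rcons s z) (size s) = z by rewrite nth_rcons ltnn eqxx.
    by rewrite (_ : (size s).-1.+1 = size s) ?nth_z ?nth_s //; lia.
Qed.

Lemma asc_wave_iota n : asc_wave (iota 1 n).
Proof.
apply/and3P; split.
- by apply/allP => x; rewrite mem_iota; lia.
- exact: iota_ltn_sorted.
- by apply/allP => i; rewrite size_iota mem_iota => i_range; rewrite !nth_iota; lia.
Qed.

Lemma asc_wave_pair a b : 0 < a < b -> asc_wave [:: a; b].
Proof. by rewrite /asc_wave /=; lia. Qed.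

Section WaveTuples.

Variables (N r k : nat).
Implicit Types (psi : coloring N r) (t : k.-tuple 'I_N).

Lemma size_wave_vals t : size (wave_vals t) = k.
Proof. by rewrite size_map size_tuple. Qed.

Lemma nth_wave_vals t i : i < k -> 0 < nth 0 (wave_vals t) i <= N.
Proof.
move=> lt_ik; rewrite -(size_wave_vals t) in lt_ik.
by case/mapP: (mem_nth 0 lt_ik) => x _ ->; rewrite ltn_ord.
Qed.

Lemma last_gap_lt t : 0 < k -> last_gap t < N.
Proof.
move=> k_gt0; rewrite /last_gap.
have := nth_wave_vals t (_ : k.-1 < k); have := nth_wave_vals t (_ : k.-2 < k).
lia.
Qed.

Lemma wave_vals_map N' a (f : 'I_N -> 'I_N') t :
    (forall x, val (f x) = a + val x) ->
  wave_vals (map_tuple f t) = map (addn a) (wave_vals t).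
Proof.
move=> val_f; rewrite /wave_vals /= -!map_comp.
by apply: eq_map => x /=; rewrite val_f addnS.
Qed.

Lemma last_gap_map N' a (f : 'I_N -> 'I_N') t :
  (forall x, val (f x) = a + val x) -> last_gap (map_tuple f t) = last_gap t.
Proof.
move=> val_f; rewrite /last_gap (wave_vals_map _ val_f).
have [k0|k_gt0] := posnP k.
  by rewrite !nth_default ?size_map ?size_tuple ?k0.
by rewrite !(nth_map 0) ?size_wave_vals ?subnDl //; lia.
Qed.

Lemma wave_vals_rcons t x :
  wave_vals [tuple of rcons t x] = rcons (wave_vals t) (val x).+1.
Proof. exact: map_rcons. Qed.

Lemma mono_waveI psi t c :
  asc_wave (wave_vals t) -> all (fun x => psi x == c) t -> mono_wave psi t.
Proof.
move=> t_wave t_c; rewrite /mono_wave t_wave.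
by apply: (@all_pred1_constant _ c); rewrite all_map.
Qed.

Lemma mono_wave_color psi t (c0 : 'I_r) :
  mono_wave psi t -> exists c, all (fun x => psi x == c) t.
Proof.
case/andP=> _ /(constantP c0) [c t_c]; exists c.
by rewrite -(all_map psi (pred1 c)); apply/all_pred1P.
Qed.

Lemma delta_le_last_gap psi t : mono_wave psi t -> delta N r k psi <= last_gap t.
Proof. exact: (@bigmin_le_cond _ nat _ N t). Qed.

Lemma exists_last_gap_le_delta psi :
    0 < k -> (exists t : k.-tuple 'I_N, mono_wave psi t) ->
  exists2 t : k.-tuple 'I_N, mono_wave psi t & last_gap t <= delta N r k psi.
Proof.
move=> k_gt0 [t0 t0_mono].
have gap_le_N (t : k.-tuple _) : mono_wave psi t -> last_gap t <= N.
  by move=> _; exact/ltnW/last_gap_lt.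
rewrite /delta (@bigmin_eq_arg _ nat _ N t0 _ _ t0_mono gap_le_N).
by case: arg_minP => // t t_mono _; exists t.
Qed.

Lemma exists_last_gap_le_Delta : 0 < k -> has_mono_wave N r k ->
  forall psi,
  exists2 t : k.-tuple 'I_N, mono_wave psi t & last_gap t <= Delta N k r.
Proof.
move=> k_gt0 waves psi.
have [t t_mono t_gap] := exists_last_gap_le_delta k_gt0 (waves psi).
by exists t => //; apply: leq_trans t_gap (leq_bigmax psi).
Qed.

Lemma Delta_le B :
    (forall psi, exists2 t : k.-tuple 'I_N, mono_wave psi t & last_gap t <= B) ->
  Delta N k r <= B.
Proof.
move=> waves; apply/bigmax_leqP => psi _; have [t t_mono t_gap] := waves psi.
exact: leq_trans (delta_le_last_gap t_mono) t_gap.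
Qed.

Lemma has_mono_wave_gt0 : 0 < r -> 0 < k -> has_mono_wave N r k -> 0 < N.
Proof.
case: r => // r' _ k_gt0 /(_ [ffun=> ord0]) [t _].
by case: (tnth t (Ordinal k_gt0)) => i /(leq_ltn_trans (leq0n i)).
Qed.

End WaveTuples.

Section Extension.

Variables (P D m k r : nat).
Hypotheses (k_gt1 : 1 < k) (m_gt0 : 0 < m) (block_wave : has_mono_wave m r k.+1).
Local Notation M := (P + D + m - 1).

Lemma P_le_M : P <= M.
Proof. by rewrite -addnBA // -addnA leq_addr. Qed.

Section ExtendWave.

Variable t0 : k.-tuple 'I_P.
Hypothesis t0_gap : last_gap t0 <= D.
Local Notation w := (nth 0 (wave_vals t0) k.-1).
Local Notation g := (last_gap t0).

Lemma block_subproof (j : 'I_m) : w + g - 1 + j < M.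
Proof. by have := nth_wave_vals t0 (_ : k.-1 < k); have := ltn_ord j; lia. Qed.

(* The block B: the point [block j] stands for the integer w + g + j. *)
Definition block (j : 'I_m) : 'I_M := Ordinal (block_subproof j).

Variables (psi : coloring M r.+1) (c : 'I_r.+1).
Hypotheses (t0_wave : asc_wave (wave_vals t0))
  (t0_color : all (fun x => psi (widen_ord P_le_M x) == c) t0).

Lemma wave_extended_into_block (j : 'I_m) : psi (block j) = c ->
  exists2 t : k.+1.-tuple 'I_M, mono_wave psi t & last_gap t <= D + m - 1.
Proof.
move=> block_j_c.
pose t := [tuple of rcons (map_tuple (widen_ord P_le_M) t0) (block j)].
have w_pos : 0 < w <= P by apply: nth_wave_vals; lia.
have vals_t : wave_vals t = rcons (wave_vals t0) (w + g + j).
  rewrite wave_vals_rcons (wave_vals_map (a := 0)) // map_id_in //=.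
  by congr rcons; lia.
exists t.
- apply: (mono_waveI (c := c)).
    rewrite vals_t; apply: asc_wave_rcons => //; rewrite size_wave_vals //.
    by rewrite /last_gap; lia.
  by rewrite all_rcons block_j_c eqxx all_map.
- rewrite /last_gap vals_t !nth_rcons !size_wave_vals ltnn eqxx /=.
  by rewrite (_ : k.-1 < k) //; have := ltn_ord j; lia.
Qed.

Lemma wave_in_block : (forall j, psi (block j) != c) ->
  exists2 t : k.+1.-tuple 'I_M, mono_wave psi t & last_gap t <= D + m - 1.
Proof.
move=> block_avoids_c.
have [c0 _] : exists c0 : 'I_r, True.
  have := block_avoids_c (Ordinal m_gt0).
  case: (unliftP c (psi (block (Ordinal m_gt0)))) => [c0 _ _ | ->].
    by exists c0.
  by rewrite eqxx.
pose col : coloring m r := [ffun j => odflt c0 (unlift c (psi (block j)))].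
have psi_block j : psi (block j) = lift c (col j).
  move: (block_avoids_c j); rewrite ffunE.
  by case: (unliftP c (psi (block j))) => [u -> | ->] //; rewrite eqxx.
have [t1 t1_mono] := block_wave col.
have [c1 t1_color] := mono_wave_color c0 t1_mono.
have val_block j : val (block j) = w + g - 1 + val j by [].
exists (map_tuple block t1).
- apply: (mono_waveI (c := lift c c1)).
    rewrite (wave_vals_map _ val_block); apply/asc_wave_map_addn.
    by case/andP: t1_mono.
  rewrite all_map; apply: sub_all t1_color => j /eqP col_j.
  by rewrite /= psi_block col_j.
- rewrite (last_gap_map _ val_block); have := last_gap_lt t1 (ltn0Sn k); lia.
Qed.

End ExtendWave.

Hypothesis short_wave : forall psi : coloring P r.+1,
  exists2 t : k.-tuple 'I_P, mono_wave psi t & last_gap t <= D.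

Lemma extend_mono_wave (psi : coloring M r.+1) :
  exists2 t : k.+1.-tuple 'I_M, mono_wave psi t & last_gap t <= D + m - 1.
Proof.
have [t0 t0_mono t0_gap] := short_wave [ffun x => psi (widen_ord P_le_M x)].
have t0_wave : asc_wave (wave_vals t0) by case/andP: t0_mono.
have [c t0_color] := mono_wave_color ord0 t0_mono.
have {}t0_color : all (fun x => psi (widen_ord P_le_M x) == c) t0.
  by apply: sub_all t0_color => x; rewrite ffunE.
have [j /eqP block_j_c | block_avoids_c] :=
  pickP (fun j => psi (block t0_gap j) == c).
- exact: wave_extended_into_block block_j_c.
- by apply: (wave_in_block t0_wave t0_color) => j; rewrite block_avoids_c.
Qed.

End Extension.

Lemma has_mono_wave1 N r : 0 < N -> has_mono_wave N r 1.
Proof.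
by move=> N_gt0 psi; exists [tuple Ordinal N_gt0]; rewrite /mono_wave /asc_wave.
Qed.

Lemma has_mono_wave2 r : has_mono_wave r.+1 r 2.
Proof.
move=> psi; have : ~~ injectiveb psi.
  by apply/injectiveP => /leq_card; rewrite !card_ord ltnn.
case/injectivePn => x [y neq_xy psi_xy].
wlog lt_xy : x y neq_xy psi_xy / x < y.
  move=> W; case: (ltngtP x y) => [|lt_yx|/val_inj eq_xy]; first exact: W.
  - by apply: (W y x); rewrite 1?eq_sym.
  - by rewrite eq_xy eqxx in neq_xy.
exists [tuple x; y]; apply: (mono_waveI (c := psi x)).
  exact: asc_wave_pair.
by rewrite /= psi_xy !eqxx.
Qed.

Lemma has_mono_wave_one_color k : has_mono_wave k 1 k.
Proof.
move=> psi; exists (ord_tuple k); apply: (mono_waveI (c := ord0)).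
  rewrite /wave_vals (map_comp succn val) val_ord_tuple val_enum_ord.
  by rewrite -(eq_map add1n) -iotaDl asc_wave_iota.
by apply/allP => x _; rewrite (ord1 (psi x)).
Qed.

Lemma extend_mono_wave_Mkr k r : 2 < k -> 1 < r ->
    has_mono_wave (Mkr k.-1 r) r k.-1 -> has_mono_wave (Mkr k r.-1) r.-1 k ->
  forall psi : coloring (Mkr k r) r, exists2 t : k.-tuple 'I_(Mkr k r),
    mono_wave psi t & last_gap t <= Delta (Mkr k.-1 r) k.-1 r + Mkr k r.-1 - 1.
Proof.
case: k => [|[|[|k]]] //; case: r => [|[|r]] // _ _ short_waves block_waves.
have m_gt0 := has_mono_wave_gt0 (ltn0Sn r) (ltn0Sn _) block_waves.
exact: (extend_mono_wave (isT : 1 < k.+2) m_gt0 block_waves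
          (exists_last_gap_le_Delta (ltn0Sn _) short_waves)).
Qed.

Lemma has_mono_wave_Mkr k r : 0 < k -> 0 < r -> has_mono_wave (Mkr k r) r k.
Proof.
elim: k r => [//|[|[|k]] IHk] r _ r_gt0.
- exact: has_mono_wave1.
- exact: has_mono_wave2.
elim: r r_gt0 => [//|[|r] IHr] _; first exact: has_mono_wave_one_color.
move=> psi; have [t t_mono _] := extend_mono_wave_Mkr (k := k.+3) (r := r.+2)
  isT isT (IHk r.+2 isT isT) (IHr isT) psi.
by exists t.
Qed.

Theorem corollary1p2 (k r : nat) : 3 <= k -> 2 <= r ->
  Delta (Mkr k r) k r <= Delta (Mkr k.-1 r) k.-1 r + Mkr k r.-1 - 1.
Proof.
move=> k_ge3 r_ge2; apply: Delta_le.
by apply: extend_mono_wave_Mkr => //; apply: has_mono_wave_Mkr; lia.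
Qed.
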